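(* Let $A_1,A_2,A_3,A_4\in\mathbb{R}^3$ be four non-coplanar points such that for every $i\in\{1,2,3,4\}$, $\big\|\sum_{j\neq i}\vec u(A_j,A_i)\big\|>1$, and let $A_0$ be the Fermat–Torricelli point of $A_1A_2A_3A_4$ (so $A_0$ is not a vertex and $\sum_{i=1}^4\vec u(A_0,A_i)=\vec 0$). For $i\neq j$ let $\vec\delta_{i0j}=\vec u(A_0,A_i)+\vec u(A_0,A_j)$, a direction vector of the bisector of the angle $\angle A_iA_0A_j$. Then: (1) the bisectors of each pair of angles subtended at $A_0$ by opposite edges lie on a common line through $A_0$, namely $$\frac{\vec\delta_{102}}{\|\vec\delta_{102}\|}\cdot\frac{\vec\delta_{304}}{\|\vec\delta_{304}\|}=\frac{\vec\delta_{203}}{\|\vec\delta_{203}\|}\cdot\frac{\vec\delta_{104}}{\|\vec\delta_{104}\|}=\frac{\vec\delta_{103}}{\|\vec\delta_{103}\|}\cdot\frac{\vec\delta_{204}}{\|\vec\delta_{204}\|}=-1;$$ (2) these three lines (with directions $\vec\delta_{102},\vec\delta_{103},\vec\delta_{104}$) are pairwise perpendicular at $A_0$: $$\vec\delta_{102}\cdot\vec\delta_{103}=\vec\delta_{102}\cdot\vec\delta_{104}=\vec\delta_{103}\cdot\vec\delta_{104}=0.$$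
   Context: For distinct points $P,Q\in\mathbb{R}^3$, $\vec u(P,Q)=\frac{Q-P}{\|Q-P\|}$ denotes the unit vector from $P$ to $Q$. The Fermat–Torricelli point of the tetrahedron is the minimizer over $A_0\in\mathbb{R}^3$ of $\sum_{i=1}^4\|A_0-A_i\|$; under the stated condition it is not a vertex and satisfies $\sum_{i=1}^4\vec u(A_0,A_i)=\vec 0$. The opposite edge pairs of the tetrahedron are $\{A_1A_2,A_3A_4\}$, $\{A_2A_3,A_1A_4\}$, $\{A_1A_3,A_2A_4\}$, and the corresponding angles at $A_0$ are $\angle A_iA_0A_j$. *)

From HB Require Import structures.
From mathcomp Require Import all_boot all_order all_algebra.
From mathcomp Require Import reals.
Set Implicit Arguments. Unset Strict Implicit. Unset Printing Implicit Defensive.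
Import Order.TTheory GRing.Theory Num.Theory.
Local Open Scope ring_scope.

Definition dot {R : realType} (u v : 'rV[R]_3) : R := \sum_(k < 3) u 0 k * v 0 k.

Definition enorm {R : realType} (u : 'rV[R]_3) : R := Num.sqrt (dot u u).

Definition uvec {R : realType} (P Q : 'rV[R]_3) : 'rV[R]_3 :=
  (enorm (Q - P))^-1 *: (Q - P).

Definition noncoplanar {R : realType} (A1 A2 A3 A4 : 'rV[R]_3) : Prop :=
  \det (\matrix_(i < 3, j < 3)
          (if i == 0 :> nat then (A2 - A1) 0 j
           else if i == 1 :> nat then (A3 - A1) 0 j
           else (A4 - A1) 0 j)) != 0.

Definition fermat_torricelli {R : realType} (A1 A2 A3 A4 A0 : 'rV[R]_3) : Prop :=
  forall X : 'rV[R]_3,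
    enorm (A0 - A1) + enorm (A0 - A2) + enorm (A0 - A3) + enorm (A0 - A4)
    <= enorm (X - A1) + enorm (X - A2) + enorm (X - A3) + enorm (X - A4).

Definition delta {R : realType} (A0 Ai Aj : 'rV[R]_3) : 'rV[R]_3 :=
  uvec A0 Ai + uvec A0 Aj.

Definition normalize {R : realType} (v : 'rV[R]_3) : 'rV[R]_3 := (enorm v)^-1 *: v.

From HB Require Import structures.
From mathcomp Require Import all_boot all_order all_algebra.
From mathcomp Require Import reals.
From mathcomp Require Import ring lra.
Import Order.TTheory GRing.Theory Num.Theory.
Local Open Scope ring_scope.

(* Write u_i = u(A0, A_i).  The proof has three independent ingredients.
   1. A first-order condition for minimisers of a sum of distances
      X |-> sum_Q |X - Q| at a point P distinct from every Q: moving P by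
      t v changes each distance by at most t <u(Q,P), v> + O(t^2), so
      testing the direction v = - sum_Q u(Q,P) gives the length bounds on
      the "pull" sum_Q u(Q,P).  At a vertex of the tetrahedron (where the
      vertex itself contributes |X - P|) the pull has length <= 1, which the
      hypotheses exclude; at the non-vertex minimiser A0 the pull vanishes,
      i.e. u_1 + u_2 + u_3 + u_4 = 0.
   2. For four unit vectors with zero sum, (u_1 + u_2).(u_1 + u_3) = 0, since
      the six pairwise products add up to -2.
   3. Zero sum makes the opposite bisectors u_i + u_j and u_k + u_l opposite
      vectors; they are non-zero because otherwise all four vertices would
      lie in the plane through A0 spanned by u_i and u_k. *)

Section Euclidean.
Context {R : realType}.
Implicit Types (A O P Q X : 'rV[R]_3) (u v w p q : 'rV[R]_3).

Lemma dotE u v : dot u v = u 0 0 * v 0 0 + u 0 1 * v 0 1 + u 0 2 * v 0 2.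
Proof.
rewrite /dot !big_ord_recl big_ord0 addr0 addrA.
by congr (_ + _ + _); congr (u 0 _ * v 0 _); apply: val_inj.
Qed.

Lemma dotC u v : dot u v = dot v u.
Proof. by rewrite !dotE; ring. Qed.

Lemma dotDl u w v : dot (u + w) v = dot u v + dot w v.
Proof. by rewrite !dotE !mxE; ring. Qed.

Lemma dot0l v : dot 0 v = 0.
Proof. by rewrite dotE !mxE; ring. Qed.

Lemma dotNl u v : dot (- u) v = - dot u v.
Proof. by rewrite !dotE !mxE; ring. Qed.

Lemma dot_suml (r : seq 'rV[R]_3) (F : 'rV[R]_3 -> 'rV[R]_3) v :
  dot (\sum_(x <- r) F x) v = \sum_(x <- r) dot (F x) v.
Proof. exact: (big_morph (dot^~ v) (fun u w => dotDl u w v) (dot0l v)). Qed.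

Lemma dot_ge0 u : 0 <= dot u u.
Proof. by rewrite dotE; nra. Qed.

Lemma dot_eq0 u : (dot u u == 0) = (u == 0).
Proof.
apply/eqP/eqP => [uu0|->]; last exact: dot0l.
apply/rowP => k; rewrite mxE; apply/eqP; rewrite -sqrf_eq0 expr2.
by apply/eqP; apply: (psumr_eq0P _ uu0) => // i _; rewrite -expr2 sqr_ge0.
Qed.

Lemma enorm_sq u : enorm u ^+ 2 = dot u u.
Proof. by rewrite sqr_sqrtr // dot_ge0. Qed.

Lemma enorm_ge0 u : 0 <= enorm u.
Proof. exact: sqrtr_ge0. Qed.

Lemma enorm_gt0 u : (0 < enorm u) = (u != 0).
Proof. by rewrite sqrtr_gt0 lt_neqAle dot_ge0 andbT eq_sym dot_eq0. Qed.

Lemma enorm0 : enorm (0 : 'rV[R]_3) = 0.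
Proof. by rewrite /enorm dot0l sqrtr0. Qed.

Lemma enormN u : enorm (- u) = enorm u.
Proof. by rewrite /enorm dotNl dotC dotNl opprK. Qed.

Lemma enormZ (t : R) u : 0 <= t -> enorm (t *: u) = t * enorm u.
Proof.
move=> t_ge0; rewrite /enorm (_ : dot _ _ = t ^+ 2 * dot u u).
  by rewrite sqrtrM ?sqr_ge0 // sqrtr_sqr ger0_norm.
by rewrite !dotE !mxE; ring.
Qed.

Lemma normalize_unit u : u != 0 -> dot (normalize u) (normalize u) = 1.
Proof.
rewrite -enorm_gt0 => /gt_eqF/negbT nu.
rewrite /normalize (_ : dot _ _ = (enorm u ^+ 2)^-1 * dot u u).
  by rewrite -enorm_sq mulVf // sqrf_eq0.
by rewrite !dotE !mxE; field.
Qed.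

Lemma normalize_opposite u w : u != 0 -> u + w = 0 ->
  dot (normalize u) (normalize w) = -1.
Proof.
move=> nu /eqP; rewrite addrC addr_eq0 => /eqP ->.
by rewrite /normalize enormN scalerN dotC dotNl -/(normalize u) normalize_unit.
Qed.

Lemma uvec_unit {P Q} : P != Q -> dot (uvec P Q) (uvec P Q) = 1.
Proof. by rewrite eq_sym -subr_eq0; exact: normalize_unit. Qed.

Lemma uvecN P Q : uvec P Q = - uvec Q P.
Proof. by rewrite /uvec -enormN opprB -scalerN opprB. Qed.

Lemma uvec_decomp {P Q} : P != Q -> Q = P + enorm (Q - P) *: uvec P Q.
Proof.
rewrite eq_sym -subr_eq0 -enorm_gt0 => /gt_eqF/negbT nQP.
by rewrite /uvec scalerA mulfV // scale1r addrC subrK.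
Qed.

(* The square root lies below its tangents: s <= (a^2 + s^2) / (2a). *)
Lemma tangent_bound (a s : R) : 0 < a -> s <= (a ^+ 2 + s ^+ 2) / (2 * a).
Proof.
move=> a_gt0; rewrite ler_pdivlMr ?mulr_gt0 //.
by have := sqr_ge0 (a - s); lra.
Qed.

Lemma dist_first_variation P Q v (t : R) : P != Q ->
  enorm (P + t *: v - Q) <= enorm (P - Q) + t * dot (uvec Q P) v
                            + t ^+ 2 * (dot v v / (2 * enorm (P - Q))).
Proof.
rewrite -subr_eq0 -enorm_gt0 => a_gt0.
apply: le_trans (tangent_bound _ _ a_gt0) _; rewrite le_eqVlt; apply/orP; left.
have sq : enorm (P + t *: v - Q) ^+ 2
    = enorm (P - Q) ^+ 2 + 2 * t * dot (P - Q) v + t ^+ 2 * dot v v.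
  by rewrite !enorm_sq !dotE !mxE; ring.
have proj : dot (uvec Q P) v = (enorm (P - Q))^-1 * dot (P - Q) v.
  by rewrite /uvec !dotE !mxE; ring.
by apply/eqP; rewrite sq proj; field; rewrite gt_eqF.
Qed.

Lemma le0_of_small_steps (k C : R) : 0 <= C ->
  (forall t, 0 < t -> k <= t * C) -> k <= 0.
Proof.
move=> C_ge0 small; rewrite leNgt; apply/negP => k_gt0.
have C1_gt0 : 0 < C + 1 by lra.
have := small (k / (C + 1)) (divr_gt0 k_gt0 C1_gt0).
by rewrite mulrAC ler_pdivlMr //; nra.
Qed.

Section FirstOrderCondition.
Context {Qs : seq 'rV[R]_3} {P : 'rV[R]_3}.
Hypothesis P_notin_Qs : P \notin Qs.

Let sumdist X := \sum_(Q <- Qs) enorm (X - Q).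
Let pull := \sum_(Q <- Qs) uvec Q P.
Let curvature v := \sum_(Q <- Qs) dot v v / (2 * enorm (P - Q)).

Lemma curvature_ge0 v : 0 <= curvature v.
Proof.
rewrite /curvature big_seq sumr_ge0 // => Q _.
by rewrite divr_ge0 ?dot_ge0 ?mulr_ge0 ?enorm_ge0.
Qed.

Lemma sumdist_first_variation v t :
  sumdist (P + t *: v) <= sumdist P + t * dot pull v + t ^+ 2 * curvature v.
Proof.
rewrite /sumdist /pull /curvature dot_suml !mulr_sumr -!big_split /= !big_seq.
apply: ler_sum => Q QQs; apply: dist_first_variation.
by apply: contraNneq P_notin_Qs => ->.
Qed.

(* Testing the direction - pull: |pull|^2 <= a |pull|. *)
Lemma minimizer_first_order (a : R) : 0 <= a ->
  (forall X, sumdist P <= a * enorm (X - P) + sumdist X) ->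
  dot pull pull <= a * enorm pull.
Proof.
move=> a_ge0 P_min; rewrite -subr_le0.
apply: (le0_of_small_steps _ _ (curvature_ge0 (- pull))) => t t_gt0.
have := P_min (P + t *: - pull); have := sumdist_first_variation (- pull) t.
rewrite [P + _ - P]addrAC subrr add0r enormZ ?enormN ?(ltW t_gt0) // dotC dotNl.
by move=> variation minimality; rewrite -(ler_pM2l t_gt0); lra.
Qed.

Lemma minimizer_pull_eq0 : (forall X, sumdist P <= sumdist X) -> pull = 0.
Proof.
move=> P_min; apply/eqP; rewrite -dot_eq0 eq_le dot_ge0 andbT.
rewrite -(mul0r (enorm pull)); apply: minimizer_first_order => // X.
by rewrite mul0r add0r.
Qed.

Lemma minimizer_pull_le1 :
  (forall X, sumdist P <= enorm (X - P) + sumdist X) -> enorm pull <= 1.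
Proof.
move=> P_min; have := enorm_ge0 pull.
have : dot pull pull <= 1 * enorm pull.
  by apply: minimizer_first_order => // X; rewrite mul1r.
by rewrite -enorm_sq; nra.
Qed.

End FirstOrderCondition.

Lemma vertex_pull_le1 P Q1 Q2 Q3 : P \notin [:: Q1; Q2; Q3] ->
  (forall X, enorm (P - Q1) + enorm (P - Q2) + enorm (P - Q3)
     <= enorm (X - P) + enorm (X - Q1) + enorm (X - Q2) + enorm (X - Q3)) ->
  enorm (uvec Q1 P + uvec Q2 P + uvec Q3 P) <= 1.
Proof.
move=> P_notin P_min; move: (minimizer_pull_le1 P_notin).
rewrite !big_cons !big_nil !addr0 !addrA; apply=> X.
by rewrite !big_cons !big_nil !addr0 !addrA; have := P_min X; lra.
Qed.

Lemma fermat_torricelli_balance {A1 A2 A3 A4 A0} :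
  A0 \notin [:: A1; A2; A3; A4] -> fermat_torricelli A1 A2 A3 A4 A0 ->
  uvec A0 A1 + uvec A0 A2 + uvec A0 A3 + uvec A0 A4 = 0.
Proof.
move=> A0_notin A0_min; rewrite !(uvecN A0) -!opprD; apply/eqP.
rewrite oppr_eq0; apply/eqP; move: (minimizer_pull_eq0 A0_notin).
rewrite !big_cons !big_nil !addr0 !addrA; apply=> X.
by rewrite !big_cons !big_nil !addr0 !addrA; apply: A0_min.
Qed.

Definition triple (a b c : 'rV[R]_3) : R :=
  a 0 0 * (b 0 1 * c 0 2 - b 0 2 * c 0 1) - a 0 1 * (b 0 0 * c 0 2 - b 0 2 * c 0 0)
  + a 0 2 * (b 0 0 * c 0 1 - b 0 1 * c 0 0).

(* A row vector written through its three coordinates, so that entries at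
   computed indices reduce. *)
Lemma row3E u : u = \row_k [:: u 0 0; u 0 1; u 0 2]`_k.
Proof.
apply/rowP => k; rewrite mxE.
by case: k => [[|[|[|//]]] ?] /=; congr (u 0 _); apply: val_inj.
Qed.

Lemma noncoplanar_triple A1 A2 A3 A4 : noncoplanar A1 A2 A3 A4 ->
  triple (A2 - A1) (A3 - A1) (A4 - A1) != 0.
Proof.
rewrite /noncoplanar (expand_det_row _ 0) !big_ord_recl big_ord0 /cofactor.
rewrite !(expand_det_row _ 0) !big_ord_recl !big_ord0 /cofactor !det_mx11.
apply: contraNneq => triple0; apply/eqP; rewrite -[RHS]triple0.
by rewrite [A1]row3E [A2]row3E [A3]row3E [A4]row3E /triple !mxE /bump /=; ring.
Qed.

Lemma noncoplanar_distinct A1 A2 A3 A4 : noncoplanar A1 A2 A3 A4 ->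
  [/\ A1 \notin [:: A2; A3; A4], A2 \notin [:: A1; A3; A4],
      A3 \notin [:: A1; A2; A4] & A4 \notin [:: A1; A2; A3]].
Proof.
move=> /noncoplanar_triple nc.
by split; rewrite !inE !negb_or; apply/and3P; split; apply: contraNneq nc => eq_pts;
  apply/eqP; rewrite /triple eq_pts !mxE; ring.
Qed.

Definition in_plane (O p q X : 'rV[R]_3) : Prop :=
  exists c d : R, X = O + c *: p + d *: q.

(* Four points lying in a common plane; unlike noncoplanar, this notion is
   visibly symmetric in the points. *)
Definition coplanar (X1 X2 X3 X4 : 'rV[R]_3) : Prop :=
  exists O p q, [/\ in_plane O p q X1, in_plane O p q X2,
                    in_plane O p q X3 & in_plane O p q X4].

Lemma noncoplanar_not_coplanar {A1 A2 A3 A4} :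
  noncoplanar A1 A2 A3 A4 -> ~ coplanar A1 A2 A3 A4.
Proof.
move=> /noncoplanar_triple/eqP nc [O [p [q [[c1 [d1 E1]] [c2 [d2 E2]] [c3 [d3 E3]]]]]].
by move=> [c4 [d4 E4]]; apply: nc; rewrite /triple E1 E2 E3 E4 !mxE; ring.
Qed.

Lemma in_plane_dir {O p q X} (c d : R) :
  O != X -> uvec O X = c *: p + d *: q -> in_plane O p q X.
Proof.
move=> OX dirX; exists (enorm (X - O) * c), (enorm (X - O) * d).
by rewrite {1}(uvec_decomp OX) dirX scalerDr !scalerA addrA.
Qed.

Lemma bisectors_orthogonal u1 u2 u3 u4 :
  dot u1 u1 = 1 -> dot u2 u2 = 1 -> dot u3 u3 = 1 -> dot u4 u4 = 1 ->
  u1 + u2 + u3 + u4 = 0 -> dot (u1 + u2) (u1 + u3) = 0.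
Proof.
move=> n1 n2 n3 /[swap] /eqP; rewrite addrC addr_eq0 => /eqP ->.
by move: n1 n2 n3; rewrite !dotE !mxE; lra.
Qed.

(* Opposite bisectors with zero sum point in opposite directions; neither
   vanishes, since otherwise X1, X2 lie on the line O + R u(O,X1) and Y1, Y2
   on the line O + R u(O,Y1), making the four points coplanar. *)
Lemma opposite_bisectors O X1 X2 Y1 Y2 : ~ coplanar X1 X2 Y1 Y2 ->
  O != X1 -> O != X2 -> O != Y1 -> O != Y2 ->
  delta O X1 X2 + delta O Y1 Y2 = 0 ->
  dot (normalize (delta O X1 X2)) (normalize (delta O Y1 Y2)) = -1.
Proof.
move=> ncop nX1 nX2 nY1 nY2 balance; apply: normalize_opposite (balance).
apply: contra_notN ncop => /eqP dX0.
have dY0 : delta O Y1 Y2 = 0 by move: balance; rewrite dX0 add0r.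
have opp X X' : delta O X X' = 0 -> uvec O X' = - uvec O X.
  by move=> /eqP; rewrite /delta addrC addr_eq0 => /eqP.
exists O, (uvec O X1), (uvec O Y1); split.
- by apply: (in_plane_dir 1 0) nX1 _; rewrite scale1r scale0r addr0.
- apply: (in_plane_dir (-1) 0) nX2 _.
  by rewrite scaleN1r scale0r addr0 (opp _ _ dX0).
- by apply: (in_plane_dir 0 1) nY1 _; rewrite scale1r scale0r add0r.
- apply: (in_plane_dir 0 (-1)) nY2 _.
  by rewrite scaleN1r scale0r add0r (opp _ _ dY0).
Qed.

Lemma fermat_torricelli_not_vertex {A1 A2 A3 A4 A0} : noncoplanar A1 A2 A3 A4 ->
  1 < enorm (uvec A2 A1 + uvec A3 A1 + uvec A4 A1) ->
  1 < enorm (uvec A1 A2 + uvec A3 A2 + uvec A4 A2) ->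
  1 < enorm (uvec A1 A3 + uvec A2 A3 + uvec A4 A3) ->
  1 < enorm (uvec A1 A4 + uvec A2 A4 + uvec A3 A4) ->
  fermat_torricelli A1 A2 A3 A4 A0 -> A0 \notin [:: A1; A2; A3; A4].
Proof.
move=> /noncoplanar_distinct [d1 d2 d3 d4] h1 h2 h3 h4 A0_min.
rewrite !inE; apply/negP; case/or4P => /eqP A0E; subst A0;
  rewrite /fermat_torricelli subrr enorm0 in A0_min.
- suff: enorm (uvec A2 A1 + uvec A3 A1 + uvec A4 A1) <= 1 by lra.
  by apply: vertex_pull_le1 d1 _ => X; have := A0_min X; lra.
- suff: enorm (uvec A1 A2 + uvec A3 A2 + uvec A4 A2) <= 1 by lra.
  by apply: vertex_pull_le1 d2 _ => X; have := A0_min X; lra.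
- suff: enorm (uvec A1 A3 + uvec A2 A3 + uvec A4 A3) <= 1 by lra.
  by apply: vertex_pull_le1 d3 _ => X; have := A0_min X; lra.
- suff: enorm (uvec A1 A4 + uvec A2 A4 + uvec A3 A4) <= 1 by lra.
  by apply: vertex_pull_le1 d4 _ => X; have := A0_min X; lra.
Qed.

End Euclidean.

Theorem mainTheorem2 (R : realType) (A1 A2 A3 A4 A0 : 'rV[R]_3) :
  noncoplanar A1 A2 A3 A4 ->
  1 < enorm (uvec A2 A1 + uvec A3 A1 + uvec A4 A1) ->
  1 < enorm (uvec A1 A2 + uvec A3 A2 + uvec A4 A2) ->
  1 < enorm (uvec A1 A3 + uvec A2 A3 + uvec A4 A3) ->
  1 < enorm (uvec A1 A4 + uvec A2 A4 + uvec A3 A4) ->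
  fermat_torricelli A1 A2 A3 A4 A0 ->
  (dot (normalize (delta A0 A1 A2)) (normalize (delta A0 A3 A4)) = -1 /\
   dot (normalize (delta A0 A2 A3)) (normalize (delta A0 A1 A4)) = -1 /\
   dot (normalize (delta A0 A1 A3)) (normalize (delta A0 A2 A4)) = -1) /\
  (dot (delta A0 A1 A2) (delta A0 A1 A3) = 0 /\
   dot (delta A0 A1 A2) (delta A0 A1 A4) = 0 /\
   dot (delta A0 A1 A3) (delta A0 A1 A4) = 0).
Proof.
move=> nc h1 h2 h3 h4 A0_min.
have A0_notin := fermat_torricelli_not_vertex nc h1 h2 h3 h4 A0_min.
have balance := fermat_torricelli_balance A0_notin A0_min.
have ncop := noncoplanar_not_coplanar nc.
move: A0_notin; rewrite !inE !negb_or => /and4P [n1 n2 n3 n4].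
have u1 := uvec_unit n1; have u2 := uvec_unit n2.
have u3 := uvec_unit n3; have u4 := uvec_unit n4.
split; (split; [|split]).
- by apply: opposite_bisectors => //; rewrite /delta -balance (ACl ((1*2)*(3*4))).
- apply: opposite_bisectors => //; last by rewrite /delta -balance (ACl ((2*3)*(1*4))).
  by case=> O [p [q [? ? ? ?]]]; apply: ncop; exists O, p, q.
- apply: opposite_bisectors => //; last by rewrite /delta -balance (ACl ((1*3)*(2*4))).
  by case=> O [p [q [? ? ? ?]]]; apply: ncop; exists O, p, q.
- exact: bisectors_orthogonal u1 u2 u3 u4 balance.
- by apply: bisectors_orthogonal u1 u2 u4 u3 _; rewrite -balance (ACl (1*2*4*3)).
- by apply: bisectors_orthogonal u1 u3 u4 u2 _; rewrite -balance (ACl (1*4*2*3)).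
Qed.
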